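(* Let $n\ge2$ and $p,u,v\in\mathbb R^{n-1}$, and let $P:\mathbb R^n\to\mathbb R^{n-1}$ be the projection onto the first $n-1$ coordinates. Then there exist $a,b\in\mathbb R^n$ such that the lens $L=B(a,1)\cap B(b,1)$ can be written as $L=\{(x,z): x\in P(L),\ f(x)\le z\le g(x)\}$ for a convex function $f$ and a concave function $g$ on $P(L)$, with $p$ in the interior of $P(L)$, $f,g$ differentiable at $p$, $\nabla f(p)=u$ and $\nabla g(p)=v$.
   Context: For $a\in\mathbb R^n$, $B(a,1)$ is the closed Euclidean unit ball centered at $a$. A lens is an intersection of two closed Euclidean unit balls. *)

From HB Require Import structures.
From mathcomp Require Import all_boot all_order all_algebra.
From mathcomp Require Import all_classical all_reals all_analysis.
Set Implicit Arguments. Unset Strict Implicit. Unset Printing Implicit Defensive.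
Import Order.TTheory GRing.Theory Num.Theory.
Import numFieldNormedType.Exports.
Local Open Scope classical_set_scope.
Local Open Scope ring_scope.

Definition dotv (R : realType) (k : nat) (x y : 'rV[R]_k) : R :=
  \sum_(i < k) x 0 i * y 0 i.

Definition eball1 (R : realType) (k : nat) (a : 'rV[R]_k) : set 'rV[R]_k :=
  [set x | \sum_(i < k) (x 0 i - a 0 i) ^+ 2 <= 1].

Definition lens (R : realType) (k : nat) (a b : 'rV[R]_k) : set 'rV[R]_k :=
  eball1 a `&` eball1 b.

Definition convex_on (R : realType) (k : nat) (S : set 'rV[R]_k) (f : 'rV[R]_k -> R) :=
  forall x y t, S x -> S y -> 0 <= t <= 1 ->
    f (t *: x + (1 - t) *: y) <= t * f x + (1 - t) * f y.

Definition concave_on (R : realType) (k : nat) (S : set 'rV[R]_k) (f : 'rV[R]_k -> R) :=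
  forall x y t, S x -> S y -> 0 <= t <= 1 ->
    t * f x + (1 - t) * f y <= f (t *: x + (1 - t) *: y).

From HB Require Import structures.
From mathcomp Require Import all_boot all_order all_algebra.
From mathcomp Require Import all_classical all_reals all_analysis.
From mathcomp Require Import ring lra.
Import Order.TTheory GRing.Theory Num.Theory.
Import numFieldNormedType.Exports.
Local Open Scope classical_set_scope.
Local Open Scope ring_scope.
Set Implicit Arguments. Unset Strict Implicit. Unset Printing Implicit Defensive.

(* Over a base point x, the ball B((c, h), 1) meets the vertical line through x
   in the segment [h - r_c(x), h + r_c(x)], where r_c(x) = sqrt (1 - |x - c|^2)
   and the gradient of r_c at p is (c - p) / r_c(p).  With centres (ca, al) and
   (cb, 0), the lens is the region over its projection between the floor
   max (al - r_ca, - r_cb) and the roof min (al + r_ca, r_cb); convexity of the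
   lens alone makes the floor convex and the roof concave.  Choosing
   p - ca = u / sqrt (1 + |u|^2) and cb - p = v / sqrt (1 + |v|^2) gives
   r_ca(p) = 1 / sqrt (1 + |u|^2) and r_cb(p) = 1 / sqrt (1 + |v|^2), so that
   al - r_ca and r_cb have gradients u and v at p; taking al to be the larger of
   these two heights makes the two segments overlap properly over p, hence near
   p the floor is al - r_ca and the roof is r_cb. *)

Section Differentials.
Variable R : realType.

Lemma is_diff_coord m n (M : 'M[R]_(m, n)) (i : 'I_m) (j : 'I_n) :
  is_diff M (fun N : 'M[R]_(m, n) => N i j) (fun N : 'M[R]_(m, n) => N i j).
Proof.
have @f : {linear 'M[R]_(m, n) -> R}.
  by exists (fun N : 'M[R]_(m, n) => N i j); do 2![eexists]; do ?[constructor];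
     rewrite ?mxE// => ? *; rewrite ?mxE//; move=> ?; rewrite !mxE.
apply: DiffDef; first exact: differentiable_coord.
by rewrite (_ : (fun _ => _) = f) // diff_lin //; exact: coord_continuous.
Qed.

Lemma is_diff_sum (V W : normedModType R) n (h dh : 'I_n -> V -> W) x :
  (forall i, is_diff x (h i) (dh i)) ->
  is_diff x (\sum_(i < n) h i) (\sum_(i < n) dh i).
Proof.
by move=> hdh; elim/big_ind2 : _ => // *; [exact: is_diff_cst | exact: is_diffD].
Qed.

Lemma is_diff_sqrt (y : R) : 0 < y ->
  is_diff y (@Num.sqrt R) (fun t => t / (2 * Num.sqrt y)).
Proof.
move=> y_gt0; have [sqrt_derivable _] := is_derive1_sqrt y_gt0.
apply: DiffDef; first exact/derivable1_diffP.
by rewrite deriv1E // derive1E derive_sqrt.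
Qed.

Lemma is_diff_near (V W : normedModType R) (f g dg : V -> W) (p : V) :
  is_diff p g dg -> (\forall x \near p, f x = g x) -> is_diff p f dg.
Proof.
move=> gdg fg; have dgp : differentiable g p by [].
have fgp : f p = g p := nbhs_singleton fg.
have f_expand : f \o shift p = cst (f p) + 'd g p +o_ 0 id.
  apply/eqaddoP => e e_gt0.
  move: (diff_locally dgp) ((nbhs0P _ _).1 fg) => /eqaddoP /(_ e e_gt0).
  apply: filterS2 => x gx fgx.
  suff -> : (f \o shift p - (cst (f p) + 'd g p)) x =
            (g \o shift p - (cst (g p) + 'd g p)) x by [].
  by rewrite /= fgp; congr (_ - _); rewrite /= addrC fgx.
have dfg : 'd f p = 'd g p :> (V -> W).
  by apply: diff_unique => //; exact: diff_continuous.
apply: DiffDef; last by rewrite dfg diff_val.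
by apply/diff_locallyP; rewrite dfg; split => //; exact: diff_continuous.
Qed.

End Differentials.

Section HalfChord.
Variable R : realType.
Implicit Types (m : nat).

Definition sqdist m (c x : 'rV[R]_m) : R := \sum_(i < m) (x 0 i - c 0 i) ^+ 2.

(* Junk value 0 outside the unit ball, as Num.sqrt vanishes on negatives. *)
Definition half_chord m (c x : 'rV[R]_m) : R := Num.sqrt (1 - sqdist c x).

Lemma dotvZl m (k : R) (w h : 'rV[R]_m) : dotv (k *: w) h = k * dotv w h.
Proof. by rewrite /dotv mulr_sumr; apply: eq_bigr => i _; rewrite mxE mulrA. Qed.

Lemma dotvZr m (k : R) (w h : 'rV[R]_m) : dotv w (k *: h) = k * dotv w h.
Proof. by rewrite /dotv mulr_sumr; apply: eq_bigr => i _; rewrite mxE mulrCA. Qed.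

Lemma dotvNl m (w h : 'rV[R]_m) : dotv (- w) h = - dotv w h.
Proof. by rewrite -scaleN1r dotvZl mulN1r. Qed.

Lemma dotv_ge0 m (w : 'rV[R]_m) : 0 <= dotv w w.
Proof. by apply: sumr_ge0 => i _; rewrite -expr2 sqr_ge0. Qed.

Lemma sqdist_dotv m (c x : 'rV[R]_m) : sqdist c x = dotv (x - c) (x - c).
Proof. by apply: eq_bigr => i _; rewrite !mxE expr2. Qed.

Lemma is_diff_sqdist m (c p : 'rV[R]_m) :
  is_diff p (sqdist c) (fun h => 2 * dotv (p - c) h).
Proof.
have -> : sqdist c = \sum_(i < m) (fun x : 'rV[R]_m => (x 0 i - c 0 i) ^+ 2).
  by apply/funext => x; rewrite fct_sumE.
have -> : (fun h => 2 * dotv (p - c) h) =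
          \sum_(i < m) (fun h : 'rV[R]_m => 2 * (p 0 i - c 0 i) * h 0 i).
  apply/funext => h; rewrite fct_sumE /dotv mulr_sumr.
  by apply: eq_bigr => i _; rewrite !mxE mulrA.
apply: is_diff_sum => i.
have coordB : is_diff p ((fun x : 'rV[R]_m => x 0 i) - cst (c 0 i))
                       ((fun x : 'rV[R]_m => x 0 i) - 0).
  exact/is_diffB/is_diff_coord.
apply: is_diff_eq (@is_diffX _ _ _ _ 1 _ coordB) _.
by apply/funext => h /=; rewrite expr1 subr0 mulr_natl.
Qed.

Lemma is_diff_half_chord m (c p : 'rV[R]_m) : sqdist c p < 1 ->
  is_diff p (half_chord c) (fun h => dotv ((half_chord c p)^-1 *: (c - p)) h).
Proof.
move=> p_in.
have inner_pos : 0 < (cst 1 - sqdist c) p by rewrite /= subr_gt0.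
rewrite (_ : half_chord c = Num.sqrt \o (cst 1 - sqdist c)) //.
have inner_diff := is_diffB (is_diff_cst (1 : R) p) (is_diff_sqdist c p).
apply: is_diff_eq (is_diff_comp inner_diff (is_diff_sqrt inner_pos)) _.
apply/funext => h /=; rewrite -[c - p]opprB scalerN dotvNl dotvZl.
rewrite -[(_ - _) h]/(0 - 2 * dotv (p - c) h) sub0r.
by field; rewrite sqrtr_eq0 -ltNge.
Qed.

Lemma half_chord_tilted m (w c p : 'rV[R]_m) :
  let s := (Num.sqrt (1 + dotv w w))^-1 in
  p - c = s *: w -> sqdist c p < 1 /\ half_chord c p = s.
Proof.
move=> s pc; have D_gt0 : 0 < 1 + dotv w w by have := dotv_ge0 w; lra.
have S_gt0 : 0 < Num.sqrt (1 + dotv w w) by rewrite sqrtr_gt0.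
have S2 : Num.sqrt (1 + dotv w w) ^+ 2 = 1 + dotv w w by rewrite sqr_sqrtr ?ltW.
have sqdistE : sqdist c p = dotv w w / (1 + dotv w w).
  by rewrite sqdist_dotv pc dotvZl dotvZr mulrA -expr2 exprVn S2 mulrC.
have s2 : 1 - sqdist c p = s ^+ 2.
  by rewrite sqdistE /s exprVn S2; field; rewrite gt_eqF.
split; first by rewrite sqdistE ltr_pdivrMr // mul1r ltrDr.
by rewrite /half_chord s2 sqrtr_sqr ger0_norm // invr_ge0 ltW.
Qed.

End HalfChord.

Section Balls.
Variable R : realType.
Implicit Types (k m : nat).

Lemma sqrB_add_le1 (z al q : R) :
  (z - al) ^+ 2 + q <= 1 <->
  q <= 1 /\ al - Num.sqrt (1 - q) <= z <= al + Num.sqrt (1 - q).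
Proof.
have sq_ge0 := sqr_ge0 (z - al); split=> [z_in | [q_le1 /andP[z_ge z_le]]].
  split; first lra.
  by rewrite -ler_distl -sqrtr_sqr ler_sqrt; lra.
have s_ge0 := sqrtr_ge0 (1 - q).
have s2 : Num.sqrt (1 - q) ^+ 2 = 1 - q by rewrite sqr_sqrtr // subr_ge0.
move: s2 s_ge0 z_ge z_le; set s := Num.sqrt (1 - q) => s2 s_ge0 z_ge z_le.
have : 0 <= (al + s - z) * (z - (al - s)) by apply: mulr_ge0; rewrite subr_ge0.
by rewrite !expr2 in s2 *; nra.
Qed.

Lemma sqdist_split m (A y : 'rV[R]_(m + 1)) :
  sqdist A y = sqdist (lsubmx A) (lsubmx y) + (rsubmx y 0 0 - rsubmx A 0 0) ^+ 2.
Proof.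
rewrite /sqdist big_split_ord /= big_ord1 !mxE; congr (_ + _).
by apply: eq_bigr => i _; rewrite !mxE.
Qed.

Lemma eball1_row_mxE m (c : 'rV[R]_m) (al : R) (y : 'rV[R]_(m + 1)) :
  eball1 (row_mx c (const_mx al)) y <->
  sqdist c (lsubmx y) <= 1 /\
  al - half_chord c (lsubmx y) <= rsubmx y 0 0 <= al + half_chord c (lsubmx y).
Proof.
rewrite /eball1 /= -/(sqdist _ _) sqdist_split row_mxKl row_mxKr !mxE addrC.
exact: sqrB_add_le1.
Qed.

Lemma eball1_convex k (a y1 y2 : 'rV[R]_k) (t : R) :
  eball1 a y1 -> eball1 a y2 -> 0 <= t <= 1 -> eball1 a (t *: y1 + (1 - t) *: y2).
Proof.
rewrite /eball1 /= => y1_in y2_in /andP[t_ge0 t_le1].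
apply: le_trans (_ : t * \sum_(i < k) (y1 0 i - a 0 i) ^+ 2 +
   (1 - t) * \sum_(i < k) (y2 0 i - a 0 i) ^+ 2 <= 1); last first.
  have : t * \sum_(i < k) (y1 0 i - a 0 i) ^+ 2 <= t by rewrite ler_piMr.
  have : (1 - t) * \sum_(i < k) (y2 0 i - a 0 i) ^+ 2 <= 1 - t.
    by rewrite ler_piMr // subr_ge0.
  lra.
rewrite !mulr_sumr -big_split /=; apply: ler_sum => i _; rewrite !mxE.
set d := y1 0 i - a 0 i; set e := y2 0 i - a 0 i.
have -> : t * y1 0 i + (1 - t) * y2 0 i - a 0 i = t * d + (1 - t) * e.
  by rewrite /d /e; ring.
(* [t d^2 + (1 - t) e^2 - (t d + (1 - t) e)^2 = t (1 - t) (d - e)^2] *)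
have : 0 <= t * (1 - t) * (d - e) ^+ 2.
  by rewrite mulr_ge0 ?sqr_ge0 // mulr_ge0 // subr_ge0.
by rewrite !expr2 => defect; nra.
Qed.

Lemma lens_convex k (a b y1 y2 : 'rV[R]_k) (t : R) :
  lens a b y1 -> lens a b y2 -> 0 <= t <= 1 -> lens a b (t *: y1 + (1 - t) *: y2).
Proof. by move=> [] ? ? [] ? ? t01; split; apply: eball1_convex. Qed.

Lemma convex_between_graphs m (L : set 'rV[R]_(m + 1)) (f g : 'rV[R]_m -> R) :
  let PL := (@lsubmx R 1 m 1) @` L in
  (forall y1 y2 t, L y1 -> L y2 -> 0 <= t <= 1 -> L (t *: y1 + (1 - t) *: y2)) ->
  L = [set y | PL (lsubmx y) /\ f (lsubmx y) <= rsubmx y 0 0 <= g (lsubmx y)] ->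
  convex_on PL f /\ concave_on PL g.
Proof.
move=> PL L_convex LE.
pose lift (x : 'rV[R]_m) (z : R) : 'rV[R]_(m + 1) := row_mx x (const_mx z).
have liftE x z : lsubmx (lift x z) = x /\ rsubmx (lift x z) 0 0 = z.
  by rewrite row_mxKl row_mxKr mxE.
have lift_conv x1 x2 z1 z2 t : t *: lift x1 z1 + (1 - t) *: lift x2 z2 =
    lift (t *: x1 + (1 - t) *: x2) (t * z1 + (1 - t) * z2).
  rewrite /lift !scale_row_mx add_row_mx; congr row_mx.
  by apply/matrixP => i j; rewrite !mxE.
have LliftE x z : L (lift x z) <-> PL x /\ f x <= z <= g x.
  by rewrite {1}LE /=; case: (liftE x z) => -> ->.
have f_le_g x : PL x -> f x <= g x.
  move=> [y Ly <-]; move: Ly; rewrite {1}LE => -[_ /andP[]]; exact: le_trans.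
have comb_between x1 x2 z1 z2 t : PL x1 -> PL x2 -> 0 <= t <= 1 ->
    f x1 <= z1 <= g x1 -> f x2 <= z2 <= g x2 ->
    f (t *: x1 + (1 - t) *: x2) <= t * z1 + (1 - t) * z2 <=
    g (t *: x1 + (1 - t) *: x2).
  move=> P1 P2 t01 z1_in z2_in.
  have := L_convex _ _ t (proj2 (LliftE x1 z1) (conj P1 z1_in))
                         (proj2 (LliftE x2 z2) (conj P2 z2_in)) t01.
  by rewrite lift_conv => /LliftE[].
have fg_between x : PL x -> f x <= f x <= g x /\ f x <= g x <= g x.
  by move=> Px; rewrite !lexx f_le_g.
split=> x1 x2 t P1 P2 t01.
- have [[fx1 _] [fx2 _]] := (fg_between x1 P1, fg_between x2 P2).
  by case/andP: (comb_between _ _ _ _ t P1 P2 t01 fx1 fx2).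
- have [[_ gx1] [_ gx2]] := (fg_between x1 P1, fg_between x2 P2).
  by case/andP: (comb_between _ _ _ _ t P1 P2 t01 gx1 gx2).
Qed.

End Balls.

Section LensBetweenGraphs.
Variables (R : realType) (m : nat) (ca cb : 'rV[R]_m) (al : R).

Local Notation a := (row_mx ca (const_mx al) : 'rV[R]_(m + 1)).
Local Notation b := (row_mx cb (const_mx 0) : 'rV[R]_(m + 1)).
Local Notation PL := ((@lsubmx R 1 m 1) @` lens a b).

Definition lens_floor (x : 'rV[R]_m) : R :=
  Num.max (al - half_chord ca x) (- half_chord cb x).

Definition lens_roof (x : 'rV[R]_m) : R :=
  Num.min (al + half_chord ca x) (half_chord cb x).

Lemma lens_memE (y : 'rV[R]_(m + 1)) : lens a b y <->
  [/\ sqdist ca (lsubmx y) <= 1, sqdist cb (lsubmx y) <= 1 &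
      lens_floor (lsubmx y) <= rsubmx y 0 0 <= lens_roof (lsubmx y)].
Proof.
rewrite /lens_floor /lens_roof ge_max le_min; split.
- case=> /eball1_row_mxE[qa /andP[a1 a2]] /eball1_row_mxE[qb].
  by rewrite sub0r add0r => /andP[b1 b2]; split; rewrite ?a1 ?a2 ?b1 ?b2.
- case=> qa qb /andP[/andP[a1 b1] /andP[a2 b2]].
  by split; apply/eball1_row_mxE; rewrite ?sub0r ?add0r ?a1 ?a2 ?b1 ?b2.
Qed.

Lemma lens_graphE : lens a b =
  [set y | PL (lsubmx y) /\
           lens_floor (lsubmx y) <= rsubmx y 0 0 <= lens_roof (lsubmx y)].
Proof.
apply/seteqP; split=> y.
- by move=> Ly; split; [exists y | case/lens_memE: Ly].
- move=> [[y' /lens_memE[qa qb _] y'y] y_between].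
  by apply/lens_memE; split=> //; rewrite -y'y.
Qed.

Lemma lens_floor_convex_roof_concave :
  convex_on PL lens_floor /\ concave_on PL lens_roof.
Proof. exact: convex_between_graphs (@lens_convex _ _ a b) lens_graphE. Qed.

Variable p : 'rV[R]_m.
Hypotheses (pa : sqdist ca p < 1) (pb : sqdist cb p < 1).
Hypothesis chords_overlap :
  `|half_chord ca p - half_chord cb p| < al < half_chord ca p + half_chord cb p.

Lemma near_chords_overlap : \forall x \near p,
  [/\ sqdist ca x < 1, sqdist cb x < 1 &
      `|half_chord ca x - half_chord cb x| < al <
      half_chord ca x + half_chord cb x].
Proof.
have dca := is_diff_half_chord pa; have dcb := is_diff_half_chord pb.
have dqa := is_diff_sqdist ca p; have dqb := is_diff_sqdist cb p.
have near_lt (F : 'rV[R]_m -> R) r : differentiable F p -> F p < r ->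
    \forall x \near p, F x < r.
  by move=> /differentiable_continuous /cvgr_lt; apply.
have near_gt (F : 'rV[R]_m -> R) r : differentiable F p -> r < F p ->
    \forall x \near p, r < F x.
  by move=> /differentiable_continuous /cvgr_gt; apply.
move: chords_overlap; rewrite ltr_norml => /andP[/andP[lt_l lt_r] lt_s].
near=> x; rewrite ltr_norml -andbA; split.
- by near: x; exact: near_lt.
- by near: x; exact: near_lt.
- apply/and3P; split.
  + by near: x; exact: (near_gt (half_chord ca - half_chord cb)).
  + by near: x; exact: (near_lt (half_chord ca - half_chord cb)).
  + by near: x; exact: (near_gt (half_chord ca + half_chord cb)).
Unshelve. all: by end_near.
Qed.

Lemma near_lens_floor : \forall x \near p, lens_floor x = al - half_chord ca x.
Proof.
apply: filterS near_chords_overlap => x [_ _].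
by rewrite ltr_norml => /andP[/andP[_ ab] _]; rewrite /lens_floor max_l //; lra.
Qed.

Lemma near_lens_roof : \forall x \near p, lens_roof x = half_chord cb x.
Proof.
apply: filterS near_chords_overlap => x [_ _].
by rewrite ltr_norml => /andP[/andP[ab _] _]; rewrite /lens_roof min_r //; lra.
Qed.

Lemma interior_proj_lens : interior PL p.
Proof.
apply: filterS near_chords_overlap => x [qa qb].
rewrite ltr_norml => /andP[/andP[ab ba] al_lt].
have hca_ge0 := sqrtr_ge0 (1 - sqdist ca x).
exists (row_mx x (const_mx (al - half_chord ca x))); last by rewrite row_mxKl.
apply/lens_memE; rewrite row_mxKl row_mxKr mxE /lens_floor /lens_roof.
split; [exact: ltW | exact: ltW |].
by rewrite ge_max le_min; apply/andP; split; apply/andP; split; lra.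
Qed.

Lemma is_diff_lens_floor :
  is_diff p lens_floor (fun h => dotv ((half_chord ca p)^-1 *: (p - ca)) h).
Proof.
apply: (is_diff_near (g := cst al - half_chord ca)) near_lens_floor.
apply: is_diff_eq (is_diffB (is_diff_cst al p) (is_diff_half_chord pa)) _.
apply/funext => h /=.
by rewrite -[p - ca]opprB scalerN dotvNl sub0r.
Qed.

Lemma is_diff_lens_roof :
  is_diff p lens_roof (fun h => dotv ((half_chord cb p)^-1 *: (cb - p)) h).
Proof. exact: is_diff_near (is_diff_half_chord pb) near_lens_roof. Qed.

End LensBetweenGraphs.

Lemma dist_lt_max_lt_add (R : realDomainType) (x y : R) : 0 < x -> 0 < y ->
  `|x - y| < Num.max x y < x + y.
Proof.
move=> x_gt0 y_gt0; rewrite ltr_norml -andbA.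
by have [xy | yx] := leP x y; apply/and3P; split; lra.
Qed.

Unset Implicit Arguments.

Theorem lemma4p6 (R : realType) (m : nat) (hm : (1 <= m)%N) (p u v : 'rV[R]_m) :
  exists (a b : 'rV[R]_(m + 1)) (f g : 'rV[R]_m -> R),
    let L := lens a b in
    let PL := (@lsubmx R 1 m 1) @` L in
    L = [set y | PL (lsubmx y) /\
                 f (lsubmx y) <= (rsubmx y) 0 0 <= g (lsubmx y)] /\
    convex_on PL f /\ concave_on PL g /\
    interior PL p /\
    differentiable f p /\ differentiable g p /\
    (forall h, 'd f p h = dotv u h) /\ (forall h, 'd g p h = dotv v h).
Proof.
pose su := (Num.sqrt (1 + dotv u u))^-1.
pose sv := (Num.sqrt (1 + dotv (- v) (- v)))^-1.
pose ca := p - su *: u; pose cb := p - sv *: - v.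
have pca : p - ca = su *: u by rewrite /ca opprB addrC subrK.
have cbp : cb - p = sv *: v by rewrite /cb addrC addKr scalerN opprK.
have [pa hca] : sqdist ca p < 1 /\ half_chord ca p = su.
  exact: half_chord_tilted.
have [pb hcb] : sqdist cb p < 1 /\ half_chord cb p = sv.
  by apply: half_chord_tilted; rewrite -opprB cbp scalerN.
have hc_gt0 c : sqdist c p < 1 -> 0 < half_chord c p.
  by move=> pc; rewrite sqrtr_gt0 subr_gt0.
pose al := Num.max su sv.
have overlap : `|half_chord ca p - half_chord cb p| < al <
               half_chord ca p + half_chord cb p.
  by rewrite hca hcb; apply: dist_lt_max_lt_add; rewrite -?hca -?hcb hc_gt0.
exists (row_mx ca (const_mx al)), (row_mx cb (const_mx 0)),
       (lens_floor ca cb al), (lens_roof ca cb al) => L PL.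
have Df := is_diff_lens_floor pa pb overlap.
have Dg := is_diff_lens_roof pa pb overlap.
have [f_convex g_concave] := lens_floor_convex_roof_concave ca cb al.
split; first exact: lens_graphE.
do 2!split => //; split; first exact: interior_proj_lens pa pb overlap.
do 2!split => //; split.
- have su_neq0 : su != 0 by rewrite -hca gt_eqF ?hc_gt0.
  by move=> h; rewrite diff_val hca pca scalerA mulVf ?scale1r.
- have sv_neq0 : sv != 0 by rewrite -hcb gt_eqF ?hc_gt0.
  by move=> h; rewrite diff_val hcb cbp scalerA mulVf ?scale1r.
Qed.
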